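(* Let $(g_d)_{d\ge1}$ be a sequence of integer-valued functions on the positive integers such that $g_1(n)=0$ for all $n\ge1$ and $g_d(n)=g_d(\operatorname{rad}(n))$ for all $n\ge1$ and all $d\mid n$. Then the integer sequence $a_n=\sum_{d\mid n} d\,\mu(d)\,g_d(n)$ is an Euler–Gauss sequence. In particular, for an arbitrary sequence $(f_p)$, indexed by primes $p$, of integer-valued functions on the positive integers, the sequence $a_n=\sum_{p\mid n,\ p\text{ prime}} p\, f_p(\operatorname{rad}(n))$ is an Euler–Gauss sequence.
   Context: $\mu$ is the Möbius function and $\operatorname{rad}(n)=\prod_{p\mid n,\,p\text{ prime}}p$ (with $\operatorname{rad}(1)=1$). For an integer sequence $(a_n)$ and $n\ge1$, $A_n^+=\prod_{d\mid n,\ \mu(d)=1} a_{n/d}$ and $A_n^-=\prod_{d\mid n,\ \mu(d)=-1} a_{n/d}$ (empty products equal $1$). An Euler–Gauss sequence is an integer sequence with $A_n^+\equiv A_n^-\pmod n$ for all $n\ge1$. *)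

From mathcomp Require Import all_boot all_order all_algebra.
Set Implicit Arguments. Unset Strict Implicit. Unset Printing Implicit Defensive.
Import GRing.Theory Num.Theory.
Local Open Scope ring_scope.

Definition squarefreeb (n : nat) : bool :=
  all (fun p => logn p n == 1%N) (primes n).

Definition moebius (n : nat) : int :=
  if n == 0%N then 0
  else if squarefreeb n then (-1) ^+ size (primes n) else 0.

Definition radical (n : nat) : nat := (\prod_(p <- primes n) p)%N.

Definition Aplus (a : nat -> int) (n : nat) : int :=
  \prod_(d <- divisors n | moebius d == 1) a (n %/ d)%N.
Definition Aminus (a : nat -> int) (n : nat) : int :=
  \prod_(d <- divisors n | moebius d == -1) a (n %/ d)%N.

Definition euler_gauss (a : nat -> int) : Prop :=
  forall n : nat, (0 < n)%N -> (Aplus a n = Aminus a n %[mod n%:Z])%Z.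

From mathcomp Require Import all_boot all_order all_algebra.
Import GRing.Theory Num.Theory.
Local Open Scope ring_scope.

(* Write a_n for the sequence.  Its terms with non-squarefree d vanish and g_d(n)
   only depends on rad n, so a(pN) = a(N) whenever the prime p divides N.  If p^2
   divides n, then d |-> d p^(+-1) is an involution on the squarefree divisors of
   n which flips the sign of mu(d) and preserves a(n/d), hence A_n^+ = A_n^-.  If
   n is squarefree, the factor a(n/n) = a(1) = 0 kills the side containing d = n,
   while for every prime q | n the other side contains the factor
   a(q) = g_1(q) - q g_q(q), a multiple of q; so that side is a multiple of n.
   The second sequence is the first one for g_p(n) = -f_p(rad n) at primes p and
   g_d = 0 otherwise. *)

Lemma moebius_neq0_gt0 d : moebius d != 0 -> (0 < d)%N.
Proof. by rewrite /moebius; case: d. Qed.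

Lemma moebius_sq_dvd p d : prime p -> (p ^ 2 %| d)%N -> moebius d = 0.
Proof.
move=> pp p2d; rewrite /moebius; case: eqP => // /eqP; rewrite -lt0n => d0.
have pd : p \in primes d by rewrite mem_primes pp d0 (dvdn_trans _ p2d) ?dvdn_exp.
have logp2 : (2 <= logn p d)%N by rewrite -pfactor_dvdn.
suff /negbTE -> : ~~ squarefreeb d by [].
by apply/allPn; exists p => //; rewrite neq_ltn logp2 orbT.
Qed.

Lemma moebius_mul_prime p d : prime p -> (0 < d)%N -> ~~ (p %| d)%N ->
  moebius (p * d) = - moebius d.
Proof.
move=> pp d0 npd; have p0 := prime_gt0 pp.
have npr : p \notin primes d by rewrite mem_primes pp d0 npd.
have primes_pd : perm_eq (primes (p * d)) (p :: primes d).
  apply: uniq_perm; rewrite /= ?npr ?primes_uniq // => q.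
  by rewrite primesM // primes_prime // !in_cons in_nil orbF.
have sqf_pd : squarefreeb (p * d) = squarefreeb d.
  rewrite /squarefreeb (perm_all _ primes_pd) /= lognM // logn_prime // eqxx.
  rewrite (_ : logn p d = 0%N) /=; last by apply/eqP; rewrite -leqn0 leqNgt logn_gt0.
  apply: eq_in_all => q qd; rewrite lognM // logn_prime //.
  by have /negbTE -> : q != p by apply: contraNneq npr => <-.
rewrite /moebius sqf_pd (perm_size primes_pd) /= muln_eq0 !eqn0Ngt p0 d0 /=.
by case: (squarefreeb d); rewrite ?exprS ?mulN1r ?oppr0.
Qed.

Lemma moebius_prime p : prime p -> moebius p = -1.
Proof.
move=> pp; rewrite -[p]muln1 moebius_mul_prime // dvdn1.
by case: eqP pp => // ->.
Qed.

Lemma squarefreebPn n : (0 < n)%N -> ~~ squarefreeb n ->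
  exists2 p, prime p & (p ^ 2 %| n)%N.
Proof.
move=> n0 /allPn [p pn /eqP logp1].
have pp : prime p by move: pn; rewrite mem_primes => /andP[].
exists p; rewrite // pfactor_dvdn // ltn_neqAle eq_sym logn_gt0 pn andbT.
exact/eqP.
Qed.

Lemma squarefreeb_prime_ndvd_divn n q : squarefreeb n -> q \in primes n ->
  ~~ (q %| n %/ q)%N.
Proof.
move=> /allP/(_ q) sqf qn; have /eqP logq1 := sqf qn.
move: qn; rewrite mem_primes => /and3P[pq n0 qn].
apply/negP => /(dvdn_mul (dvdnn q)); rewrite mulnn mulnC divnK // pfactor_dvdn //.
by rewrite logq1.
Qed.

Lemma moebius_divn_prime n q : squarefreeb n -> q \in primes n ->
  moebius (n %/ q)%N = - moebius n.
Proof.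
move=> sqf qn; move: (qn); rewrite mem_primes => /and3P[pq n0 qdn].
have nq0 : (0 < n %/ q)%N by rewrite (divn_gt0 _ (prime_gt0 pq)) dvdn_leq.
rewrite -{2}(divnK qdn) mulnC moebius_mul_prime ?opprK //.
exact: squarefreeb_prime_ndvd_divn.
Qed.

Lemma moebius_squarefree_pm1 n : (0 < n)%N -> squarefreeb n ->
  moebius n = 1 \/ moebius n = -1.
Proof.
move=> n0 sqf; rewrite /moebius eqn0Ngt n0 sqf /= -signr_odd.
by case: odd; [right | left].
Qed.

Lemma mem_primes_prod (s : seq nat) : all prime s ->
  primes (\prod_(p <- s) p) =i s.
Proof.
elim: s => [|p s IHs] /=; first by rewrite big_nil.
case/andP => pp ps q; have prod_gt0 : (0 < \prod_(r <- s) r)%N.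
  by rewrite big_seq prodn_cond_gt0 // => r /(allP ps)/prime_gt0.
rewrite big_cons (primesM _ (prime_gt0 pp) prod_gt0) primes_prime // IHs //.
by rewrite !in_cons in_nil orbF.
Qed.

Lemma primes_radical n : primes (radical n) = primes n.
Proof.
apply/eq_primes => q; rewrite mem_primes_prod //.
by apply/allP => p; rewrite mem_primes => /andP[].
Qed.

Lemma radical_idem n : radical (radical n) = radical n.
Proof. by rewrite {1}/radical primes_radical. Qed.

Lemma radical_mul_prime_dvd p N : prime p -> (0 < N)%N -> (p %| N)%N ->
  radical (p * N) = radical N.
Proof.
move=> pp N0 pN; rewrite /radical (_ : primes (p * N) = primes N) //.
apply/eq_primes => q; rewrite (primesM _ (prime_gt0 pp) N0) primes_prime //.
rewrite in_cons in_nil orbF.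
by case: eqP => // ->; rewrite mem_primes pp N0 pN.
Qed.

Lemma filter_prime_divisors n : [seq d <- divisors n | prime d] = primes n.
Proof.
case: n => [|n]; first by [].
apply: (irr_sorted_eq ltn_trans ltnn).
- by apply: (sorted_filter ltn_trans); apply: sorted_divisors_ltn.
- exact: sorted_primes.
by move=> q; rewrite mem_filter mem_primes -dvdn_divisors // andbC.
Qed.

Lemma big_filter_involution (R : Type) (idx : R) (op : Monoid.com_law idx)
    (I : eqType) (s : seq I) (P Q : pred I) (sigma : I -> I) (F : I -> R) :
  uniq s ->
  (forall x, x \in s -> P x || Q x ->
     [/\ sigma x \in s, sigma (sigma x) = x, P (sigma x) = Q x,
         Q (sigma x) = P x & F (sigma x) = F x]) ->
  \big[op/idx]_(x <- s | P x) F x = \big[op/idx]_(x <- s | Q x) F x.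
Proof.
move=> s_uniq sigma_inv; rewrite -[LHS]big_filter -[RHS]big_filter.
have sigma_Q x : x \in [seq y <- s | Q y] ->
    [/\ sigma x \in [seq y <- s | P y], sigma (sigma x) = x & F (sigma x) = F x].
  rewrite mem_filter => /andP[Qx xs].
  have [sxs sxK Psx _ Fsx] := sigma_inv x xs (introT orP (or_intror Qx)).
  by rewrite mem_filter Psx Qx sxs.
have sigma_P x : x \in [seq y <- s | P y] ->
    [/\ sigma x \in [seq y <- s | Q y] & sigma (sigma x) = x].
  rewrite mem_filter => /andP[Px xs].
  have [sxs sxK _ Qsx _] := sigma_inv x xs (introT orP (or_introl Px)).
  by rewrite mem_filter Qsx Px sxs.
have perm_PQ : perm_eq [seq x <- s | P x] (map sigma [seq x <- s | Q x]).
  apply: uniq_perm; first exact: filter_uniq.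
    rewrite map_inj_in_uniq ?filter_uniq //.
    by apply: (can_in_inj (g := sigma)) => x /sigma_Q[].
  move=> x; apply/idP/mapP => [/sigma_P[Qsx sxK] | [y /sigma_Q[] Psy _ _ ->] //].
  by exists (sigma x).
rewrite (perm_big _ perm_PQ) big_map; apply: eq_big_seq => x.
by case/sigma_Q.
Qed.

Lemma eq_euler_gauss a b : a =1 b -> euler_gauss a -> euler_gauss b.
Proof.
move=> eq_ab EGa n n0; rewrite /Aplus /Aminus.
under eq_bigr do rewrite -eq_ab.
under [X in (_ = X %[mod _])%Z]eq_bigr do rewrite -eq_ab.
exact: EGa.
Qed.

Definition pflip p d := if (p %| d)%N then (d %/ p)%N else (p * d)%N.

Section PFlip.

Variables p d : nat.
Hypotheses (pp : prime p) (mud : moebius d != 0).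

Lemma moebius_neq0_ndvd_divp : (p %| d)%N -> ~~ (p %| d %/ p)%N.
Proof.
move=> pd; apply: contra mud => /(dvdn_mul (dvdnn p)).
by rewrite mulnn mulnC divnK // => /(moebius_sq_dvd _ _ pp) ->.
Qed.

Lemma pflipK : pflip p (pflip p d) = d.
Proof.
rewrite /pflip; have [pd|npd] := boolP (p %| d)%N.
  by rewrite (negbTE (moebius_neq0_ndvd_divp pd)) mulnC divnK.
by rewrite dvdn_mulr // (mulKn _ (prime_gt0 pp)).
Qed.

Lemma moebius_pflip : moebius (pflip p d) = - moebius d.
Proof.
have d0 := moebius_neq0_gt0 _ mud; rewrite /pflip; case: ifPn => pd.
  rewrite -{2}(divnK pd) mulnC moebius_mul_prime ?opprK ?moebius_neq0_ndvd_divp //.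
  by rewrite (divn_gt0 _ (prime_gt0 pp)) dvdn_leq.
exact: moebius_mul_prime.
Qed.

Lemma pflip_dvd n : (p %| n)%N -> (d %| n)%N -> (pflip p d %| n)%N.
Proof.
move=> pn dn; rewrite /pflip; case: ifPn => pd.
  exact: dvdn_trans (dvdn_div pd) dn.
by rewrite Gauss_dvd ?pn ?prime_coprime.
Qed.

End PFlip.

Section RadicalInvariant.

Variable a : nat -> int.
Hypothesis a_mul_prime_dvd :
  forall p N, prime p -> (0 < N)%N -> (p %| N)%N -> a (p * N) = a N.

Section NonSquarefree.

Variables p n : nat.
Hypotheses (pp : prime p) (n0 : (0 < n)%N) (p2n : (p ^ 2 %| n)%N).

Let pn : (p %| n)%N.
Proof. by apply: dvdn_trans p2n; rewrite dvdn_exp. Qed.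

Lemma a_divn_pmul e : ~~ (p %| e)%N -> (p * e %| n)%N ->
  a (n %/ (p * e))%N = a (n %/ e)%N.
Proof.
move=> npe pen; set k := (n %/ (p * e))%N.
have n_eq : n = (k * (p * e))%N by rewrite divnK.
have [k0 e0] : (0 < k)%N /\ (0 < e)%N.
  by move: n0; rewrite n_eq !muln_gt0 => /and3P[].
have pk : (p %| k)%N.
  move: p2n; rewrite n_eq -mulnn mulnCA (dvdn_pmul2l (prime_gt0 pp)).
  by rewrite Euclid_dvdM // (negbTE npe) orbF.
by rewrite n_eq mulnA mulnK // mulnC a_mul_prime_dvd.
Qed.

Lemma a_divn_pflip d : (d %| n)%N -> moebius d != 0 ->
  a (n %/ pflip p d)%N = a (n %/ d)%N.
Proof.
move=> dn mud; rewrite /pflip; case: ifPn => pd; last first.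
  by rewrite a_divn_pmul // Gauss_dvd ?prime_coprime ?pn.
have npd' : ~~ (p %| d %/ p)%N by apply: moebius_neq0_ndvd_divp.
by rewrite -[in RHS](divnK pd) mulnC a_divn_pmul // mulnC divnK.
Qed.

Lemma Aplus_eq_Aminus_sq_dvd : Aplus a n = Aminus a n.
Proof.
rewrite /Aplus /Aminus.
apply: (@big_filter_involution _ _ _ _ _ _ _ (pflip p) _ (divisors_uniq n)) => d.
rewrite -dvdn_divisors // => dn mud1.
have mud : moebius d != 0 by case/orP: mud1 => /eqP ->.
rewrite -dvdn_divisors ?pflip_dvd ?pflipK ?moebius_pflip ?a_divn_pflip //.
by rewrite !eqr_oppLR.
Qed.

End NonSquarefree.

Section Squarefree.

Hypotheses (a1 : a 1 = 0) (dvdz_a_prime : forall q, prime q -> (q%:Z %| a q)%Z).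

Lemma big_moebius_self_eq0 n : (0 < n)%N ->
  \prod_(d <- divisors n | moebius d == moebius n) a (n %/ d)%N = 0.
Proof.
move=> n0; rewrite big_mkcond (bigD1_seq n) ?divisors_id ?divisors_uniq //=.
by rewrite eqxx divnn n0 a1 mul0r.
Qed.

Lemma dvdz_big_moebius_opp n : (0 < n)%N -> squarefreeb n ->
  (n%:Z %| \prod_(d <- divisors n | moebius d == - moebius n) a (n %/ d)%N)%Z.
Proof.
move=> n0 sqf; rewrite dvdzE /=; apply/(dvdn_partP _ n0) => q qn.
have /eqP logq1 : logn q n == 1%N by move/allP: sqf; apply.
move: (qn); rewrite mem_primes => /and3P[pq _ qdn].
rewrite p_part logq1 expn1 -[q]/`|q%:Z|%N -dvdzE.
rewrite big_mkcond (bigD1_seq (n %/ q)%N) ?divisors_uniq //=; last first.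
  by rewrite -dvdn_divisors ?dvdn_div.
rewrite moebius_divn_prime // eqxx divnA // mulKn // mulrC.
exact/dvdz_mull/dvdz_a_prime.
Qed.

End Squarefree.

Lemma euler_gauss_rad_invariant :
  a 1 = 0 -> (forall q, prime q -> (q%:Z %| a q)%Z) -> euler_gauss a.
Proof.
move=> a1 dvdz_a_prime n n0.
have [sqf|/(squarefreebPn _ n0)[p pp p2n]] := boolP (squarefreeb n); last first.
  by rewrite (Aplus_eq_Aminus_sq_dvd _ _ pp n0 p2n).
have self_eq0 := big_moebius_self_eq0 a1 _ n0.
have opp_dvd := dvdz_big_moebius_opp dvdz_a_prime _ n0 sqf.
apply/eqP; rewrite eqz_mod_dvd /Aplus /Aminus.
have [mu1|mu1] := moebius_squarefree_pm1 _ n0 sqf;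
  rewrite mu1 ?opprK in self_eq0 opp_dvd.
- by rewrite self_eq0 sub0r rpredN.
- by rewrite self_eq0 subr0.
Qed.

End RadicalInvariant.

Lemma sq_dvd_of_dvd_mul_prime p N e : prime p -> (p %| N)%N ->
  (e %| p * N)%N -> ~~ (e %| N)%N -> (p ^ 2 %| e)%N.
Proof.
move=> pp pN epN neN.
have [pe|npe] := boolP (p %| e)%N; last first.
  by move: epN; rewrite Gauss_dvdr ?(negbTE neN) // coprime_sym prime_coprime.
case/dvdnP: pe => e' ->{e} in epN neN *.
have e'N : (e' %| N)%N.
  by move: epN; rewrite [(p * N)%N]mulnC (dvdn_pmul2r (prime_gt0 pp)).
have [pe'|npe'] := boolP (p %| e')%N; first by rewrite -mulnn dvdn_mul.
by move: neN; rewrite Gauss_dvd ?e'N ?pN // coprime_sym prime_coprime.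
Qed.

Definition moebius_sum (g : nat -> nat -> int) n :=
  \sum_(d <- divisors n) (d%:Z * moebius d * g d n).

Section MoebiusSum.

Variable g : nat -> nat -> int.

Lemma moebius_sum1 : g 1 1 = 0 -> moebius_sum g 1 = 0.
Proof.
by move=> g11; rewrite /moebius_sum (_ : divisors 1 = [:: 1%N]) // big_seq1 g11 mulr0.
Qed.

Lemma dvdz_moebius_sum_prime q : prime q -> g 1 q = 0 ->
  (q%:Z %| moebius_sum g q)%Z.
Proof.
move=> pq g1q; rewrite /moebius_sum big_seq; apply: rpred_sum => d.
rewrite -(dvdn_divisors _ (prime_gt0 pq)); case/primeP: pq => _ /[apply] /orP[] /eqP ->.
  by rewrite g1q mulr0 dvdz0.
by rewrite -mulrA dvdz_mulr.
Qed.

Hypothesis g_rad :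
  forall n d, (0 < n)%N -> (d %| n)%N -> g d n = g d (radical n).

Lemma moebius_sum_mul_prime_dvd p N : prime p -> (0 < N)%N -> (p %| N)%N ->
  moebius_sum g (p * N) = moebius_sum g N.
Proof.
move=> pp N0 pN; have pN0 : (0 < p * N)%N by rewrite muln_gt0 (prime_gt0 pp).
rewrite /moebius_sum (bigID (fun e => e %| N)%N) /=.
rewrite [X in _ + X]big1_seq ?addr0 => [|e /andP[neN]]; last first.
  rewrite -dvdn_divisors // => epN.
  have p2e := sq_dvd_of_dvd_mul_prime _ _ _ pp pN epN neN.
  by rewrite (moebius_sq_dvd _ _ pp p2e) mulr0 mul0r.
have divisors_N : perm_eq [seq e <- divisors (p * N) | (e %| N)%N] (divisors N).
  apply: uniq_perm; rewrite ?filter_uniq ?divisors_uniq // => e.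
  rewrite mem_filter -!dvdn_divisors //.
  by case: (boolP (e %| N)%N) => //= /dvdn_mull->.
rewrite -big_filter (perm_big _ divisors_N); apply: eq_big_seq => e.
rewrite -dvdn_divisors // => eN.
by rewrite g_rad ?dvdn_mull // radical_mul_prime_dvd // -g_rad.
Qed.

Theorem euler_gauss_moebius_sum :
  (forall n, (0 < n)%N -> g 1 n = 0) -> euler_gauss (moebius_sum g).
Proof.
move=> g1; apply: euler_gauss_rad_invariant.
- exact: moebius_sum_mul_prime_dvd.
- exact/moebius_sum1/g1.
- by move=> q pq; apply/dvdz_moebius_sum_prime/g1/prime_gt0.
Qed.

End MoebiusSum.

Lemma sum_primes_moebius_sum f n :
  \sum_(p <- primes n) (p%:Z * f p (radical n))
  = moebius_sum (fun d m => if prime d then - f d (radical m) else 0) n.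
Proof.
rewrite /moebius_sum [RHS](bigID prime) /=.
rewrite [X in _ = _ + X]big1 => [|d /negbTE->]; last by rewrite mulr0.
rewrite addr0 -[RHS]big_filter filter_prime_divisors; apply: eq_big_seq => p.
by rewrite mem_primes => /andP[pp _]; rewrite pp moebius_prime // mulrN1 mulrNN.
Qed.

Theorem corollary1 :
  (forall g : nat -> nat -> int,
      (forall n : nat, (0 < n)%N -> g 1%N n = 0) ->
      (forall n d : nat, (0 < n)%N -> (d %| n)%N -> g d n = g d (radical n)) ->
      euler_gauss (fun n => \sum_(d <- divisors n) (d%:Z * moebius d * g d n)))
  /\
  (forall f : nat -> nat -> int,
      euler_gauss (fun n => \sum_(p <- primes n) (p%:Z * f p (radical n)))).
Proof.
split=> [g g1 g_rad | f]; first exact: euler_gauss_moebius_sum.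
pose g d m := if prime d then - f d (radical m) else 0.
apply: (eq_euler_gauss (moebius_sum g)) => [n|].
  by rewrite sum_primes_moebius_sum.
by apply: euler_gauss_moebius_sum => [n d _ _ | n _]; rewrite /g ?radical_idem.
Qed.
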